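(* Let $n\ge 1$, $d=2^n$, and let $\Lambda$ be a CPTP Pauli channel on $n$ qubits, with Pauli fidelities $f_a$ (indexed by the $d^2$ Pauli operators $a$), so that $\Lambda$ as a superoperator is diagonal in the Pauli basis with eigenvalues $f_a$. Let $F_p=\operatorname{Tr}(\Lambda)/d^2=\frac{1}{d^2}\sum_a f_a$ be its process fidelity, assume $\tfrac12<F_p<1$, and let $\gamma=\det(\Lambda)^{-2/d^2}$. Then $$F_p-1+2\lambda_0(1-F_p)+(2F_p-1)^{\lambda_0}\;\le\;\gamma^{-1/2}\;\le\;F_p,$$ where $$\lambda_0=\frac{\log(2-2F_p)-\log\bigl(-\log(2F_p-1)\bigr)}{\log(2F_p-1)}.$$ *)

From HB Require Import structures.
From mathcomp Require Import all_boot all_order all_algebra.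
From mathcomp Require Import all_classical all_reals all_analysis.
Set Implicit Arguments. Unset Strict Implicit. Unset Printing Implicit Defensive.
Import Order.TTheory GRing.Theory Num.Theory.
Local Open Scope ring_scope.

(* An n-qubit Pauli operator (up to phase) P_a, a = (x_i, z_i)_{i<n}:
   on qubit i it is I=(0,0), X=(1,0), Z=(0,1), Y=(1,1). There are d^2 = 4^n of them. *)
Definition pauli (n : nat) := {ffun 'I_n -> bool * bool}.

(* Symplectic form: P_a and P_b anticommute iff this is true. *)
Definition anticommute (n : nat) (a b : pauli n) : bool :=
  odd (\sum_(i < n) (((a i).1 && (b i).2) + ((a i).2 && (b i).1)))%N.

(* A CPTP Pauli channel Lambda(rho) = sum_b p_b P_b rho P_b^dagger is given by
   its Pauli error probabilities p (nonnegative, summing to 1). As a superoperator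
   it is diagonal in the Pauli basis: Lambda(P_a) = f_a P_a, with Pauli fidelity
   f_a = sum_b p_b (-1)^{<a,b>}. *)
Definition pauli_fidelity (R : ringType) (n : nat) (p : pauli n -> R) (a : pauli n) : R :=
  \sum_(b : pauli n) p b * (-1) ^+ (anticommute a b).

(* Trace and determinant of the (Pauli-diagonal) superoperator. *)
Definition chan_trace (R : ringType) (n : nat) (p : pauli n -> R) : R :=
  \sum_(a : pauli n) pauli_fidelity p a.
Definition chan_det (R : comRingType) (n : nat) (p : pauli n -> R) : R :=
  \prod_(a : pauli n) pauli_fidelity p a.

From HB Require Import structures.
From mathcomp Require Import all_boot all_order all_algebra.
From mathcomp Require Import all_classical all_reals all_analysis.
From mathcomp Require Import ring lra.
Import Order.TTheory GRing.Theory Num.Theory.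
Set Implicit Arguments. Unset Strict Implicit.
Local Open Scope ring_scope.

(* The character sum over Paulis kills every nonidentity error, so the
   process fidelity F is the weight p_0 of the identity and every Pauli
   fidelity lies in [2F - 1, 1].  Moreover ln gamma^(-1/2) is the mean of
   the ln f_a.  Concavity of ln bounds that mean above by ln F (tangent at
   F) and below by (ln q)/2, q = 2F - 1 (chord through q and 1).  Finally
   q^(1/2) dominates the tangent line of the convex map x |-> q^x at any
   point lam; at lam = lam0 that tangent value is the stated lower bound. *)

Section LnBounds.
Variable R : realType.

Lemma ln_prod (I : finType) (f : I -> R) : (forall i, 0 < f i) ->
  ln (\prod_i f i) = \sum_i ln (f i).
Proof.
move=> f_gt0.
suff [] : 0 < \prod_i f i /\ ln (\prod_i f i) = \sum_i ln (f i) by [].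
apply: (big_rec2 (fun x y => 0 < x /\ ln x = y)) => [|i x y _ [x_gt0 <-]].
  by rewrite ln1.
by rewrite mulr_gt0 // lnM ?posrE.
Qed.

Lemma ln_le_tangent (c x : R) : 0 < c -> 0 < x -> ln x <= ln c + (x - c) / c.
Proof.
move=> c_gt0 x_gt0.
have : ln (x / c) <= x / c - 1.
  rewrite -ler_expR lnK ?posrE ?divr_gt0 //.
  by have := expR_ge1Dx (x / c - 1); rewrite addrC subrK.
rewrite ln_div ?posrE // lerBlDl.
by have -> : x / c - 1 = (x - c) / c by field; rewrite gt_eqF.
Qed.

Lemma ln_ge_chord (q x : R) : 0 < q -> q < 1 -> q <= x -> x <= 1 ->
  ln q * ((1 - x) / (1 - q)) <= ln x.
Proof.
move=> q_gt0 q_lt1 qx x_le1.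
have t_ge0 : 0 <= (1 - x) / (1 - q) by rewrite divr_ge0 //; lra.
have t_le1 : (1 - x) / (1 - q) <= 1 by rewrite ler_pdivrMr ?mul1r; lra.
have := @concave_ln R (Itv01 t_ge0 t_le1) q 1 q_gt0 ltr01.
rewrite !convRE /= ln1 mulr0 addr0 mulrC.
have -> // : (1 - x) / (1 - q) * q + (1 - (1 - x) / (1 - q)) * 1 = x.
by field; rewrite gt_eqF ?subr_gt0.
Qed.

Lemma sum_ln_le_mean (I : finType) (f : I -> R) (c : R) :
  0 < c -> (forall i, 0 < f i) -> \sum_i f i = #|I|%:R * c ->
  \sum_i ln (f i) <= #|I|%:R * ln c.
Proof.
move=> c_gt0 f_gt0 sumf.
have tangent_sum : \sum_i ln (f i) <= \sum_i (ln c + (f i - c) / c).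
  by apply: ler_sum => i _; apply: ln_le_tangent.
apply: (le_trans tangent_sum).
rewrite big_split /= -mulr_suml sumrB sumf !sumr_const.
by rewrite -[ln c *+ _]mulr_natl -[c *+ _]mulr_natl mulrC subrr mul0r addr0.
Qed.

Lemma sum_ln_ge_chord (I : finType) (f : I -> R) (q : R) :
  0 < q -> q < 1 -> (forall i, q <= f i <= 1) ->
  ln q * ((#|I|%:R - \sum_i f i) / (1 - q)) <= \sum_i ln (f i).
Proof.
move=> q_gt0 q_lt1 f_bounds.
have -> : #|I|%:R - \sum_i f i = \sum_i (1 - f i) by rewrite sumrB sumr_const.
rewrite mulr_suml mulr_sumr.
by apply: ler_sum => i _; have /andP[] := f_bounds i; apply: ln_ge_chord.
Qed.

Lemma powR_ge_tangent (a x y : R) : 0 < a ->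
  a `^ y * (1 + (x - y) * ln a) <= a `^ x.
Proof.
move=> a_gt0; rewrite /powR gt_eqF //.
have -> : x * ln a = y * ln a + (x - y) * ln a by ring.
by rewrite expRD ler_pM2l ?expR_gt0 // expR_ge1Dx.
Qed.

Lemma powR_ln_div (a x : R) : 0 < a -> ln a != 0 -> 0 < x ->
  a `^ (ln x / ln a) = x.
Proof. by move=> a_gt0 lna_neq0 x_gt0; rewrite /powR gt_eqF // mulfVK // lnK. Qed.

End LnBounds.

Section PauliChannel.
Variable n : nat.

Definition pauli_id : pauli n := [ffun _ => (false, false)].

Lemma anticommute_id (a : pauli n) : anticommute a pauli_id = false.
Proof. by rewrite /anticommute big1 // => i _; rewrite ffunE /= !andbF. Qed.

(* Changes the i-th tensor factor of a so that its commutation with the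
   i-th factor of b (assumed nontrivial) is reversed. *)
Definition pauli_flip (i : 'I_n) (b a : pauli n) : pauli n :=
  [ffun j => if j == i then
      (if (b i).2 then (~~ (a i).1, (a i).2) else ((a i).1, ~~ (a i).2))
    else a j].

Lemma pauli_flipK (i : 'I_n) (b : pauli n) : involutive (pauli_flip i b).
Proof.
move=> a; apply/ffunP => j; rewrite !ffunE.
case: eqP => [->|//]; rewrite ?ffunE eqxx.
by case: (b i).2; case: (a i) => u v /=; rewrite negbK.
Qed.

Lemma anticommute_flip (i : 'I_n) (b a : pauli n) : b i != (false, false) ->
  anticommute (pauli_flip i b a) b = ~~ anticommute a b.
Proof.
move=> bi_nid; rewrite /anticommute (bigD1 i) //= [in RHS](bigD1 i) //=.
rewrite (eq_bigr (fun j => ((a j).1 && (b j).2) + ((a j).2 && (b j).1))%N);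
  last by move=> j /negbTE ji; rewrite ffunE ji.
rewrite !oddD ffunE eqxx.
move: bi_nid; case: (b i) => x y; case: (a i) => u v /=.
by case: x; case: y; case: u; case: v => /=; rewrite ?negbK.
Qed.

Lemma sum_sign_anticommute (R : numDomainType) (b : pauli n) : b != pauli_id ->
  \sum_(a : pauli n) (-1) ^+ anticommute a b = 0 :> R.
Proof.
move=> b_nid.
have [i bi_nid] : exists i, b i != (false, false).
  apply/existsP; apply: contraR b_nid => /existsPn b_id.
  by apply/eqP/ffunP => j; rewrite ffunE; apply/eqP; rewrite -[_ == _]negbK b_id.
set S := \sum_a _.
have SN : S = - S.
  rewrite {1}/S (reindex_inj (can_inj (pauli_flipK i b))) -sumrN.
  by apply: eq_bigr => a _; rewrite anticommute_flip //; case: anticommute;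
    rewrite ?expr0 ?expr1 ?opprK.
apply/eqP; have := mulrn_eq0 S 2.
by rewrite mulr2n {1}SN addNr eqxx => /esym S_eq0; exact: S_eq0.
Qed.

Lemma card_pauli : #|pauli n| = ((2 ^ n) ^ 2)%N.
Proof. by rewrite card_ffun card_prod card_bool card_ord -expnM mulnC expnM. Qed.

Lemma chan_trace_id (R : numDomainType) (p : pauli n -> R) :
  chan_trace p = #|pauli n|%:R * p pauli_id.
Proof.
rewrite /chan_trace /pauli_fidelity exchange_big (bigD1 pauli_id) //=.
rewrite [X in _ + X]big1 => [|b b_nid]; last by rewrite -mulr_sumr sum_sign_anticommute ?mulr0.
rewrite addr0 -mulr_sumr; under eq_bigr do rewrite anticommute_id expr0.
by rewrite sumr_const mulrC.
Qed.

Lemma pauli_fidelity_bounds (R : realDomainType) (p : pauli n -> R) :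
  (forall b, 0 <= p b) -> \sum_b p b = 1 ->
  forall a, 2 * p pauli_id - 1 <= pauli_fidelity p a <= 1.
Proof.
move=> p_ge0 sump a.
have term_bounds b : - p b <= p b * (-1) ^+ anticommute a b <= p b.
  by have := p_ge0 b; case: anticommute; rewrite ?mulr1 ?mulrN1; lra.
apply/andP; split; last first.
  by rewrite -sump; apply: ler_sum => b _; have /andP[] := term_bounds b.
rewrite /pauli_fidelity (bigD1 pauli_id) //= anticommute_id mulr1.
move: sump; rewrite (bigD1 pauli_id) //=.
have : - \sum_(b | b != pauli_id) p b <=
       \sum_(b | b != pauli_id) p b * (-1) ^+ anticommute a b.
  by rewrite -sumrN; apply: ler_sum => b _; have /andP[] := term_bounds b.
lra.
Qed.

End PauliChannel.

Theorem theorem1 (R : realType) (n : nat) (hn : (1 <= n)%N)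
  (p : pauli n -> R) (hp0 : forall b, 0 <= p b) (hp1 : \sum_(b : pauli n) p b = 1) :
  let d : R := (2 ^ n)%:R in
  let Fp : R := chan_trace p / d ^+ 2 in
  let gamma : R := chan_det p `^ (- (2 / d ^+ 2)) in
  let lam0 : R := (ln (2 - 2 * Fp) - ln (- ln (2 * Fp - 1))) / ln (2 * Fp - 1) in
  1 / 2 < Fp < 1 ->
  Fp - 1 + 2 * lam0 * (1 - Fp) + (2 * Fp - 1) `^ lam0 <= gamma `^ (- (1 / 2)) <= Fp.
Proof.
move=> d Fp gamma lam0 /andP[Fp_gt Fp_lt1].
set N : R := #|pauli n|%:R; set f := pauli_fidelity p; set q := 2 * Fp - 1.
have dN : d ^+ 2 = N by rewrite /N card_pauli natrX.
have N_gt0 : 0 < N by rewrite -dN exprn_gt0 // ltr0n expn_gt0.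
have FpE : Fp = p (pauli_id n) by rewrite /Fp chan_trace_id dN mulrC mulKf ?gt_eqF.
have f_bounds a : q <= f a <= 1 by rewrite /q FpE; apply: pauli_fidelity_bounds.
have f_gt0 a : 0 < f a by have := f_bounds a; rewrite /q; lra.
have sumf : \sum_a f a = N * Fp by rewrite -[LHS]/(chan_trace p) chan_trace_id FpE.
have -> : gamma `^ (- (1 / 2)) = expR ((\sum_a ln (f a)) / N).
  rewrite -powRrM /powR gt_eqF ?prodr_gt0 // /chan_det ln_prod // -dN.
  by congr expR; field; rewrite pnatr_eq0 expn_eq0.
have q_gt0 : 0 < q by rewrite /q; lra.
have q_lt1 : q < 1 by rewrite /q; lra.
have lnq_lt0 : ln q < 0 by rewrite ln_lt0 ?q_gt0.
apply/andP; split; last first.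
  rewrite -[X in _ <= X]lnK ?posrE; last lra.
  by rewrite ler_expR ler_pdivrMr // mulrC sum_ln_le_mean //; lra.
have lam0E : q `^ lam0 = (1 - q) / - ln q.
  rewrite /lam0 -/q (_ : 2 - 2 * Fp = 1 - q); last by rewrite /q; lra.
  have ratio_gt0 : 0 < (1 - q) / - ln q by rewrite divr_gt0 ?subr_gt0 ?oppr_gt0.
  by rewrite -ln_div ?posrE ?subr_gt0 ?oppr_gt0 // powR_ln_div ?lt_eqF.
have -> : Fp - 1 + 2 * lam0 * (1 - Fp) + q `^ lam0 =
          q `^ lam0 * (1 + (1 / 2 - lam0) * ln q).
  by rewrite lam0E /q; field; rewrite lt_eqF.
apply: le_trans (powR_ge_tangent (1 / 2) lam0 q_gt0) _.
rewrite /powR gt_eqF // ler_expR ler_pdivlMr //.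
apply: le_trans (sum_ln_ge_chord q_gt0 q_lt1 f_bounds).
rewrite sumf (_ : ln q * ((N - N * Fp) / (1 - q)) = 1 / 2 * ln q * N) //.
by rewrite /q; field; rewrite gt_eqF // subr_gt0.
Qed.
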